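(* Let $\vec{A}\in\mathcal{G}^{p,q}$, let $(\vec{B}_1,\dots,\vec{B}_d)$ be an ordered tuple of mutually coorthogonal blades with $\vec B_k^2\in\mathbb{R}\setminus\{0\}$, and let $\vec{j}\in\{0,1\}^d$. Then $\vec{A}_{\vec c^{\vec{j}}(\overrightarrow{\vec B_1,\dots,\vec B_d})}=\vec{A}_{\vec c^{\vec{j}}(\overleftarrow{\vec B_1,\dots,\vec B_d})}$.
   Context: $\mathcal{G}^{p,q}$ is the real geometric algebra of $\mathbb{R}^{p,q}$. Blades are coorthogonal if $\vec A\vec B=\pm\vec B\vec A$. For invertible $\vec B$: $\vec{A}_{\vec c^0(\vec{B})}=\frac12(\vec{A}+\vec{B}^{-1}\vec{A}\vec{B})$, $\vec{A}_{\vec c^1(\vec{B})}=\frac12(\vec{A}-\vec{B}^{-1}\vec{A}\vec{B})$; $\vec{A}_{\vec c^{\vec{j}}(\overrightarrow{\vec B_1,\dots,\vec B_d})}=((\vec{A}_{\vec c^{j_1}(\vec{B}_1)})_{\vec c^{j_2}(\vec{B}_2)}\cdots)_{\vec c^{j_d}(\vec{B}_d)}$ and $\vec{A}_{\vec c^{\vec{j}}(\overleftarrow{\vec B_1,\dots,\vec B_d})}=((\vec{A}_{\vec c^{j_d}(\vec{B}_d)})_{\vec c^{j_{d-1}}(\vec{B}_{d-1})}\cdots)_{\vec c^{j_1}(\vec{B}_1)}$. *)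

(* Real geometric algebra G^{p,q} built on basis blades
   e_X, X a subset of {0,...,p+q-1}; e_i^2 = +1 for i < p, -1 for i >= p. *)
From HB Require Import structures.
From mathcomp Require Import all_boot all_order all_algebra.
From mathcomp Require Import reals.
From Stdlib Require Import ClassicalEpsilon.
Set Implicit Arguments. Unset Strict Implicit. Unset Printing Implicit Defensive.
Import Order.TTheory GRing.Theory Num.Theory.
Local Open Scope ring_scope.

Section GA.
Variables (R : realType) (p q : nat).
Local Notation n := (p + q)%N.

Definition mv := {ffun {set 'I_n} -> R}.

(* sign of reordering e_X e_Y: number of pairs x in X, y in Y with y < x *)
Definition reorder_sign (X Y : {set 'I_n}) : R :=
  (-1) ^+ #|[set ij : 'I_n * 'I_n | [&& ij.1 \in X, ij.2 \in Y & (ij.2 < ij.1)%N]]|.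

(* metric factor of e_X e_Y : product of e_i^2 over i in X ∩ Y *)
Definition metric_factor (X Y : {set 'I_n}) : R :=
  \prod_(i in X :&: Y) (if (i < p)%N then 1 else -1).

Definition symdiff (X Y : {set 'I_n}) : {set 'I_n} := (X :\: Y) :|: (Y :\: X).

Definition mv_add (A B : mv) : mv := [ffun X => A X + B X].
Definition mv_opp (A : mv) : mv := [ffun X => - A X].
Definition mv_scale (a : R) (A : mv) : mv := [ffun X => a * A X].
Definition mv_scalar (a : R) : mv := [ffun X => if X == set0 then a else 0].
Definition mv_zero : mv := mv_scalar 0.
Definition mv_one : mv := mv_scalar 1.

Definition gp (A B : mv) : mv :=
  [ffun C => \sum_(X : {set 'I_n}) \sum_(Y : {set 'I_n})
     (if symdiff X Y == C then A X * B Y * reorder_sign X Y * metric_factor X Y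
      else 0)].

Definition wedge (A B : mv) : mv :=
  [ffun C => \sum_(X : {set 'I_n}) \sum_(Y : {set 'I_n})
     (if [disjoint X & Y] && (X :|: Y == C) then A X * B Y * reorder_sign X Y
      else 0)].

Definition is_vector (v : mv) : Prop := forall X : {set 'I_n}, #|X| <> 1%N -> v X = 0.

(* a blade is a scalar multiple of an outer product of vectors
   (the scalar is only needed for grade 0) *)
Definition is_blade (B : mv) : Prop :=
  exists (a : R) (s : seq mv), (forall v, List.In v s -> is_vector v) /\
    B = mv_scale a (foldr wedge mv_one s).

Definition coorthogonal (A B : mv) : Prop :=
  gp A B = gp B A \/ gp A B = mv_opp (gp B A).

Definition square_nonzero_scalar (B : mv) : Prop :=
  exists c : R, c != 0 /\ gp B B = mv_scalar c.

(* two-sided inverse (chosen by classical choice; 0 if none exists) *)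
Definition mv_inv (B : mv) : mv :=
  epsilon (inhabits mv_zero) (fun X => gp B X = mv_one /\ gp X B = mv_one).

(* A_{c^j(B)} with j = false meaning 0 and j = true meaning 1 *)
Definition cproj (j : bool) (B A : mv) : mv :=
  let C := gp (gp (mv_inv B) A) B in
  mv_scale (2^-1) (if j then mv_add A (mv_opp C) else mv_add A C).

(* forward: B_1 applied first, B_d last *)
Definition cproj_fwd (d : nat) (Bs : 'I_d -> mv) (js : 'I_d -> bool) (A : mv) : mv :=
  foldl (fun X k => cproj (js k) (Bs k) X) A (enum 'I_d).

(* backward: B_d applied first, B_1 last *)
Definition cproj_bwd (d : nat) (Bs : 'I_d -> mv) (js : 'I_d -> bool) (A : mv) : mv :=
  foldr (fun k X => cproj (js k) (Bs k) X) A (enum 'I_d).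

End GA.

(* For a blade B with B^2 = c <> 0 the inverse is c^-1 B, so the c^j projection
   along B is A |-> (A + (-1)^j c^-1 B A B) / 2.  If B_k B_l = +-B_l B_k, then
   B_k (B_l A B_l) B_k = (B_k B_l) A (B_l B_k) = (B_l B_k) A (B_k B_l)
   because the sign appears twice, so the projections along different blades
   commute, and a composite of pairwise commuting maps does not depend on the
   order. *)

From mathcomp Require Import all_boot all_order all_algebra.
From mathcomp Require Import reals ring.
From Stdlib Require Import ClassicalEpsilon.
Set Implicit Arguments. Unset Strict Implicit. Unset Printing Implicit Defensive.
Import Order.TTheory GRing.Theory Num.Theory.
Local Open Scope ring_scope.

Section CommutingFold.
Variables (I : eqType) (T : Type) (f : I -> T -> T).
Hypothesis f_comm : forall a b, a != b -> forall Z, f a (f b Z) = f b (f a Z).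

Lemma foldr_commute x s Z : foldr f (f x Z) s = f x (foldr f Z s).
Proof.
elim: s => [|y s IH] //=; rewrite IH.
by case: (eqVneq x y) => [-> | /f_comm ->].
Qed.

Lemma foldr_rev_commute s Z : foldr f Z (rev s) = foldr f Z s.
Proof.
by elim: s Z => [|x s IH] Z //=; rewrite rev_cons foldr_rcons IH foldr_commute.
Qed.

End CommutingFold.

Section GeometricProduct.
Variables (R : realType) (p q : nat).
Local Notation n := (p + q)%N.
Local Notation mv := (mv R p q).
Local Notation S := {set 'I_n}.
Local Notation reorder_sign := (@reorder_sign R p q).
Local Notation metric_factor := (@metric_factor R p q).
Local Notation symdiff := (@symdiff p q).
Local Notation gp := (@gp R p q).
Local Notation mv_one := (@mv_one R p q).
Local Notation mv_scale := (@mv_scale R p q).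
Local Notation mv_add := (@mv_add R p q).
Local Notation mv_scalar := (@mv_scalar R p q).

Lemma in_symdiff (X Y : S) x : (x \in symdiff X Y) = (x \in X) (+) (x \in Y).
Proof. by rewrite /symdiff !inE; case: (x \in X); case: (x \in Y). Qed.

Lemma symdiffA (X Y W : S) : symdiff (symdiff X Y) W = symdiff X (symdiff Y W).
Proof. by apply/setP => x; rewrite !in_symdiff addbA. Qed.

Lemma symdiffCA (X Y W : S) : symdiff X (symdiff Y W) = symdiff Y (symdiff X W).
Proof. by apply/setP => x; rewrite !in_symdiff addbCA. Qed.

Lemma symdiffK (X Y : S) : symdiff X (symdiff X Y) = Y.
Proof. by apply/setP => x; rewrite !in_symdiff addKb. Qed.

Lemma symdiff0X (X : S) : symdiff set0 X = X.
Proof. by apply/setP => x; rewrite in_symdiff inE. Qed.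

Lemma symdiffX0 (X : S) : symdiff X set0 = X.
Proof. by apply/setP => x; rewrite in_symdiff inE addbF. Qed.

Lemma symdiffvv (X : S) : symdiff X X = set0.
Proof. by apply/setP => x; rewrite in_symdiff addbb inE. Qed.

Lemma symdiff_eq (X Y C : S) : (symdiff X Y == C) = (Y == symdiff X C).
Proof. by apply/eqP/eqP => [<- | ->]; rewrite symdiffK. Qed.

Definition blade_sign (X Y : S) : R := reorder_sign X Y * metric_factor X Y.

Lemma reorder_signE (X Y : S) : reorder_sign X Y =
  \prod_(ij : 'I_n * 'I_n) (-1) ^+ [&& ij.1 \in X, ij.2 \in Y & (ij.2 < ij.1)%N].
Proof.
rewrite /reorder_sign -prodr_const big_mkcond; apply: eq_bigr => ij _.
by rewrite inE; case: (_ && _).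
Qed.

Lemma metric_factorE (X Y : S) : metric_factor X Y =
  \prod_(i : 'I_n) (-1) ^+ [&& i \in X, i \in Y & (p <= i)%N].
Proof.
rewrite /metric_factor big_mkcond; apply: eq_bigr => i _.
by rewrite inE ltnNge; case: (i \in X); case: (i \in Y); case: (p <= i)%N.
Qed.

(* Both sides are products over indices of signs (-1)^b, and the exponents
   agree pointwise modulo 2. *)
Lemma blade_sign_cocycle (X Y W : S) :
  blade_sign X Y * blade_sign (symdiff X Y) W =
  blade_sign Y W * blade_sign X (symdiff Y W).
Proof.
rewrite /blade_sign !reorder_signE !metric_factorE mulrACA [RHS]mulrACA.
congr (_ * _); rewrite -!big_split.
  apply: eq_bigr => -[i j] _; rewrite /= -!signr_addb !in_symdiff; congr (_ ^+ _).
  by move: (i \in X) (i \in Y) (i \in W) (j \in X) (j \in Y) (j \in W) (j < i)%N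
    => [] [] [] [] [] [] [].
apply: eq_bigr => i _; rewrite /= -!signr_addb !in_symdiff; congr (_ ^+ _).
by move: (i \in X) (i \in Y) (i \in W) (p <= i)%N => [] [] [] [].
Qed.

Lemma blade_sign0X (Y : S) : blade_sign set0 Y = 1.
Proof.
by rewrite /blade_sign reorder_signE metric_factorE !big1 ?mulr1 // => ? _; rewrite inE.
Qed.

Lemma blade_signX0 (X : S) : blade_sign X set0 = 1.
Proof.
by rewrite /blade_sign reorder_signE metric_factorE !big1 ?mulr1 // => ? _;
  rewrite inE andbF.
Qed.

Lemma gp_coef (A B : mv) C :
  gp A B C = \sum_X A X * B (symdiff X C) * blade_sign X (symdiff X C).
Proof.
rewrite ffunE; apply: eq_bigr => X _.
rewrite (bigD1 (symdiff X C)) //= symdiffK eqxx big1 ?addr0 ?mulrA // => Y.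
by rewrite symdiff_eq => /negbTE ->.
Qed.

Lemma gpA (A B D : mv) : gp A (gp B D) = gp (gp A B) D.
Proof.
apply/ffunP => C; rewrite !gp_coef.
under [RHS]eq_bigr do rewrite gp_coef !big_distrl.
rewrite exchange_big; apply: eq_bigr => X _ /=.
have symdiff_inj : injective (symdiff X) by exact: can_inj (symdiffK X).
rewrite gp_coef big_distrr big_distrl [RHS](reindex_inj symdiff_inj).
apply: eq_bigr => V _ /=; rewrite symdiffK symdiffA [symdiff V _]symdiffCA.
set W := symdiff X (symdiff V C).
have VW : symdiff V W = symdiff X C by rewrite symdiffCA symdiffK.
have := blade_sign_cocycle X V W; rewrite VW => cocycle.
transitivity (A X * B V * D W * (blade_sign V W * blade_sign X (symdiff X C))).
  by ring.
by rewrite -cocycle; ring.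
Qed.

Lemma gp1l (A : mv) : gp mv_one A = A.
Proof.
apply/ffunP => C; rewrite gp_coef (bigD1 set0) //= big1 => [|X /negbTE X0].
  by rewrite ffunE eqxx symdiff0X blade_sign0X mul1r mulr1 addr0.
by rewrite ffunE X0 !mul0r.
Qed.

Lemma gp1r (A : mv) : gp A mv_one = A.
Proof.
apply/ffunP => C; rewrite gp_coef (bigD1 C) //= big1 => [|X XC].
  by rewrite ffunE symdiffvv eqxx blade_signX0 !mulr1 addr0.
by rewrite ffunE symdiff_eq symdiffX0 eq_sym (negbTE XC) mulr0 mul0r.
Qed.

Lemma gpZl a (A B : mv) : gp (mv_scale a A) B = mv_scale a (gp A B).
Proof.
apply/ffunP => C; rewrite [RHS]ffunE !gp_coef big_distrr.
by apply: eq_bigr => X _; rewrite ffunE /= !mulrA.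
Qed.

Lemma gpZr a (A B : mv) : gp A (mv_scale a B) = mv_scale a (gp A B).
Proof.
apply/ffunP => C; rewrite [RHS]ffunE !gp_coef big_distrr.
by apply: eq_bigr => X _; rewrite ffunE /=; ring.
Qed.

Lemma gpDl (A A' B : mv) : gp (mv_add A A') B = mv_add (gp A B) (gp A' B).
Proof.
apply/ffunP => C; rewrite [RHS]ffunE !gp_coef -big_split.
by apply: eq_bigr => X _; rewrite ffunE /=; ring.
Qed.

Lemma gpDr (A B B' : mv) : gp A (mv_add B B') = mv_add (gp A B) (gp A B').
Proof.
apply/ffunP => C; rewrite [RHS]ffunE !gp_coef -big_split.
by apply: eq_bigr => X _; rewrite ffunE /=; ring.
Qed.

Lemma scale_scalar a b : mv_scale a (mv_scalar b) = mv_scalar (a * b).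
Proof. by apply/ffunP => X; rewrite !ffunE; case: ifP; rewrite ?mulr0. Qed.

(* c^-1 B is a two-sided inverse, and two-sided inverses are unique. *)
Lemma mv_inv_square (B : mv) c : c != 0 -> gp B B = mv_scalar c ->
  mv_inv B = mv_scale c^-1 B.
Proof.
move=> c0 BB.
have invl : gp (mv_scale c^-1 B) B = mv_one by rewrite gpZl BB scale_scalar mulVf.
have invr : gp B (mv_scale c^-1 B) = mv_one by rewrite gpZr BB scale_scalar mulVf.
rewrite /mv_inv; set P := fun Z => _.
have [_ Bl] := epsilon_spec (inhabits (mv_zero R p q)) P (ex_intro _ _ (conj invr invl)).
by rewrite -[epsilon _ _]gp1r -invr gpA Bl gp1l.
Qed.

Definition sandwich (B A : mv) : mv := gp (gp B A) B.

Lemma sandwich_comb (B F G : mv) a b :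
  sandwich B [ffun X => a * F X + b * G X] =
  [ffun X => a * sandwich B F X + b * sandwich B G X].
Proof.
have -> : [ffun X => a * F X + b * G X] = mv_add (mv_scale a F) (mv_scale b G).
  by apply/ffunP => X; rewrite !ffunE.
rewrite /sandwich gpDr gpDl !gpZr !gpZl.
by apply/ffunP => X; rewrite !ffunE.
Qed.

Lemma sandwich_comm (Bk Bl A : mv) : coorthogonal Bk Bl ->
  sandwich Bk (sandwich Bl A) = sandwich Bl (sandwich Bk A).
Proof.
have sandwich2 X Y : sandwich X (sandwich Y A) = gp (gp (gp X Y) A) (gp Y X).
  by rewrite /sandwich !gpA.
have oppE X : mv_opp X = mv_scale (-1) X by apply/ffunP => Z; rewrite !ffunE mulN1r.
by rewrite !sandwich2; case=> ->; rewrite // oppE !gpZl gpZr.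
Qed.

Lemma cprojE j (B A : mv) c : c != 0 -> gp B B = mv_scalar c ->
  cproj j B A = [ffun X => 2^-1 * A X + 2^-1 * (-1) ^+ j / c * sandwich B A X].
Proof.
move=> c0 BB; rewrite /cproj (mv_inv_square c0 BB) !gpZl.
by apply/ffunP => X; case: j; rewrite !ffunE /=; ring.
Qed.

Lemma cproj_comm jk jl (Bk Bl A : mv) :
  square_nonzero_scalar Bk -> square_nonzero_scalar Bl -> coorthogonal Bk Bl ->
  cproj jk Bk (cproj jl Bl A) = cproj jl Bl (cproj jk Bk A).
Proof.
move=> [ck [ck0 Bk2]] [cl [cl0 Bl2]] BkBl.
rewrite !(cprojE _ _ ck0 Bk2) !(cprojE _ _ cl0 Bl2) !sandwich_comb sandwich_comm //.
by apply/ffunP => X; rewrite !ffunE; ring.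
Qed.

End GeometricProduct.

Theorem corollary3p5 (R : realType) (p q d : nat) (A : mv R p q)
  (Bs : 'I_d -> mv R p q) (js : 'I_d -> bool) :
  (forall k, is_blade (Bs k)) ->
  (forall k, square_nonzero_scalar (Bs k)) ->
  (forall k l, k != l -> coorthogonal (Bs k) (Bs l)) ->
  cproj_fwd Bs js A = cproj_bwd Bs js A.
Proof.
move=> _ Bs2 BsBs.
rewrite /cproj_fwd /cproj_bwd -{1}[enum 'I_d]revK foldl_rev.
apply: (foldr_rev_commute (f := fun k => cproj (js k) (Bs k))) => k l kl Z.
exact: cproj_comm (Bs2 k) (Bs2 l) (BsBs k l kl).
Qed.
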